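(* Let $X$ be a space and $Y$ a preopen (e.g., dense) subspace of $X$ which is an E-space. Then $Y$ is $F_{\aleph_0}$-embedded in $X$. In particular, every metrizable dense subspace of $X$ is $F_{\aleph_0}$-embedded in $X$.
   Context: ''Space'' means topological $T_0$-space. $Y$ is preopen in $X$ if $Y\subseteq\mathrm{int}_X(\mathrm{cl}_X(Y))$. A zero-set (cozero-set) of $X$ is $f^{-1}(0)$ (resp. its complement) for a continuous $f:X\to[0,1]$. A U-representation of $V\subseteq X$ is a sequence $(U_n(V))_{n\in\mathbb{N}}$ with $V=\bigcup_n U_n(V)$, $U_n(V)\subseteq U_{n+1}(V)$, $U_{2n-1}(V)$ a zero-set, $U_{2n}(V)$ a cozero-set. A family $\alpha$ is an almost subbase of $X$ if U-representations of its members can be chosen so that $\alpha\cup\{X\setminus U_{2n-1}(V):V\in\alpha,n\in\mathbb{N}\}$ is a subbase of $X$. A family is strongly point-finite if every countably infinite subfamily contains a finite subfamily with empty intersection; $\sigma$-strongly point-finite means a countable union of such families. An E-space is a space with a $\sigma$-strongly point-finite almost subbase. A family $\mathcal{U}$ F-separates $S\subseteq X$ if for distinct $x,y\in S$ some $U\in\mathcal{U}$ satisfies $x\in U$, $y\notin\mathrm{cl}_X(U)$, or vice versa. $Y$ is $F_{\aleph_0}$-embedded in $X$ if some family of open subsets of $X$ that is a countable union of point-finite families F-separates $Y$. *)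

From HB Require Import structures.
From mathcomp Require Import all_boot all_order all_algebra.
From mathcomp Require Import all_classical all_reals topology normedtype.
Set Implicit Arguments. Unset Strict Implicit. Unset Printing Implicit Defensive.
Import Order.TTheory GRing.Theory Num.Theory numFieldNormedType.Exports.
Local Open Scope classical_set_scope.
Local Open Scope ring_scope.

Section Defs.
Context (R : realType) (X : topologicalType).

(* "space" = T0 space *)
Definition T0_space : Prop :=
  forall x y : X, x <> y ->
    exists U : set X, open U /\ ((U x /\ ~ U y) \/ (U y /\ ~ U x)).

Definition preopen (Y : set X) : Prop := Y `<=` interior (closure Y).

Definition rel_open (Y V : set X) : Prop := exists U : set X, open U /\ V = U `&` Y.

Definition zero_set_of (Y Z : set X) : Prop :=
  exists f : X -> R, {within Y, continuous f} /\
    (forall x, Y x -> 0 <= f x <= 1) /\ Z = Y `&` f @^-1` [set 0].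

Definition cozero_set_of (Y C : set X) : Prop :=
  exists Z, zero_set_of Y Z /\ C = Y `\` Z.

(* U-representation of V (indices shifted by one: u k = U_{k+1}), so
   u (2n) = U_{2n+1} is a zero-set and u (2n+1) = U_{2n+2} a cozero-set. *)
Definition U_representation (Y V : set X) (u : nat -> set X) : Prop :=
  V = \bigcup_n u n /\ (forall n, u n `<=` u n.+1) /\
  (forall n, zero_set_of Y (u n.*2)) /\ (forall n, cozero_set_of Y (u n.*2.+1)).

(* beta is a subbase of the subspace Y: its members are open in Y and finite
   intersections of its members (the empty intersection being Y) form a base. *)
Definition subbase_of (Y : set X) (beta : set (set X)) : Prop :=
  (forall B, beta B -> rel_open Y B) /\
  (forall W x, rel_open Y W -> W x ->
     exists s : seq (set X), (forall B, B \in s -> beta B) /\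
       Y x /\ (forall B, B \in s -> B x) /\
       (forall y, Y y -> (forall B, B \in s -> B y) -> W y)).

Definition almost_subbase (Y : set X) (alpha : set (set X)) : Prop :=
  exists rep : set X -> nat -> set X,
    (forall V, alpha V -> U_representation Y V (rep V)) /\
    subbase_of Y (alpha `|` [set Y `\` rep V n.*2 | V in alpha & n in @setT nat]).

Definition strongly_point_finite (Y : set X) (F : set (set X)) : Prop :=
  forall G : set (set X), G `<=` F -> countable G -> infinite_set G ->
    exists G' : set (set X), G' `<=` G /\ finite_set G' /\
      Y `&` \bigcap_(A in G') A = set0.

Definition sigma_strongly_point_finite (Y : set X) (F : set (set X)) : Prop :=
  exists Fn : nat -> set (set X), F = \bigcup_n Fn n /\
    forall n, strongly_point_finite Y (Fn n).

Definition E_subspace (Y : set X) : Prop :=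
  exists alpha : set (set X), (forall V, alpha V -> V `<=` Y) /\
    sigma_strongly_point_finite Y alpha /\ almost_subbase Y alpha.

Definition point_finite (F : set (set X)) : Prop :=
  forall x : X, finite_set [set A | F A /\ A x].

Definition F_separates (U : set (set X)) (S : set X) : Prop :=
  forall x y, S x -> S y -> x <> y ->
    exists A, U A /\ ((A x /\ ~ closure A y) \/ (A y /\ ~ closure A x)).

Definition F_aleph0_embedded (Y : set X) : Prop :=
  exists Un : nat -> set (set X),
    (forall n A, Un n A -> open A) /\ (forall n, point_finite (Un n)) /\
    F_separates (\bigcup_n Un n) Y.

Definition metrizable_subspace (Y : set X) : Prop :=
  exists d : X -> X -> R,
    (forall x y, Y x -> Y y -> 0 <= d x y) /\
    (forall x y, Y x -> Y y -> (d x y = 0 <-> x = y)) /\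
    (forall x y, Y x -> Y y -> d x y = d y x) /\
    (forall x y z, Y x -> Y y -> Y z -> d x z <= d x y + d y z) /\
    (forall V, V `<=` Y ->
       (rel_open Y V <-> forall x, V x -> exists2 e : R, 0 < e &
          forall y, Y y -> d x y < e -> V y)).
End Defs.

From mathcomp Require Import all_boot all_order all_algebra.
From mathcomp Require Import all_classical all_reals topology normedtype wochoice.
From mathcomp Require Import lra.
Set Implicit Arguments. Unset Strict Implicit. Unset Printing Implicit Defensive.
Import Order.TTheory GRing.Theory Num.Theory numFieldNormedType.Exports.
Local Open Scope classical_set_scope.
Local Open Scope ring_scope.

(* Proof idea: it suffices to find countably many strongly point-finite
   families of subsets of Y such that any two distinct points of Y are
   separated by a member S, i.e. S contains a neighbourhood in Y of one point
   and misses a neighbourhood in Y of the other.  Replacing S by the open set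
   int cl Y \ cl (Y \ S) of X gives F-separating families, thanks to the
   preopenness of Y, and keeps them point-finite: finitely many of these open
   sets containing a point of int cl Y meet Y in a common point, which lies in
   all the corresponding S.
   For an E-space, the separating sets are the cozero sets U_2k(V) cut down by
   the level sets {f > 1/j} of the functions defining the zero sets U_2l-1(V);
   they lie in V, so strong point-finiteness is inherited from the almost
   subbase.  For a metric, Stone's construction provides, at each scale 1/m,
   countably many disjoint families of open cells of radius 1/m covering Y. *)

Lemma infinite_countable_subset (T : pointedType) (A : set T) :
  infinite_set A -> exists2 B, B `<=` A & countable B /\ infinite_set B.
Proof.
move=> /infiniteP/pcard_leP/injfunPex[f fA finj].
exists (range f); first by move=> _ [i _ <-]; exact: fA.
split; first exact: card_le_trans (card_image_le _ _) (card_leT _).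
apply/infiniteP; have /card_eqPle[] : card_eq (range f) [set: nat].
  exact: inj_card_eq finj.
by move=> _.
Qed.

Lemma exists_inv_nat_lt (R : archiRealFieldType) (r : R) :
  0 < r -> exists j : nat, j.+1%:R^-1 < r.
Proof.
move=> r0; exists (Num.truncn r^-1).
by rewrite -[ltRHS]invrK ltf_pV2 ?posrE ?invr_gt0 // truncnS_gt.
Qed.

Lemma well_order_antisymmetric (T : eqType) (Rw : rel T) :
  well_order Rw -> antisymmetric Rw.
Proof.
by move=> wo x y; apply: (@wo_chain_antisymmetric _ Rw predT) => // A _; exact: wo.
Qed.

Lemma well_order_min (T : eqType) (Rw : rel T) : well_order Rw ->
  forall A : set T, A !=set0 -> exists c, A c /\ forall c', A c' -> Rw c c'.
Proof.
move=> wo A [a Aa].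
have [|c [[/asboolP cA cmin] _]] := wo (fun x => `[< A x >]).
  by exists a; apply/asboolP.
by exists c; split => // c' Ac'; apply: cmin; apply/asboolP.
Qed.

Lemma dense_preopen (X : topologicalType) (Y : set X) : dense Y -> preopen Y.
Proof.
move=> dY x _; suff -> : closure Y = setT by rewrite interiorT.
apply/seteqP; split => // p _ B; rewrite nbhsE => -[O [oO Op] OB].
have [z [Oz Yz]] := dY O (ex_intro _ p Op) oO.
by exists z; split => //; apply: OB.
Qed.

Section RelativeNeighbourhoods.
Context (X : topologicalType) (Y : set X).

Definition rel_nbhs (S : set X) (x : X) :=
  exists U : set X, [/\ open U, U x & U `&` Y `<=` S].

Definition separates (S : set X) (x y : X) := rel_nbhs S x /\ rel_nbhs (~` S) y.

Lemma rel_nbhsS (A B : set X) x : A `<=` B -> rel_nbhs A x -> rel_nbhs B x.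
Proof. by move=> AB [U [oU Ux UA]]; exists U; split => // z /UA /AB. Qed.

Lemma rel_nbhsI (A B : set X) x : rel_nbhs A x -> rel_nbhs B x -> rel_nbhs (A `&` B) x.
Proof.
move=> [U [oU Ux UA]] [W [oW Wx WB]]; exists (U `&` W); split; first exact: openI.
  by split.
by move=> z [[Uz Wz] Yz]; split; [apply: UA | apply: WB].
Qed.

Lemma rel_open_nbhs (V : set X) x : rel_open Y V -> V x -> rel_nbhs V x.
Proof. by move=> [U [oU ->]] [Ux _]; exists U; split. Qed.

(* The largest open subset of int cl Y whose trace on Y lies in S. *)
Definition open_ext (S : set X) := (closure Y)° `&` ~` closure (Y `\` S).

Lemma open_open_ext S : open (open_ext S).
Proof. by apply: openI; [exact: open_interior | exact/closed_openC/closed_closure]. Qed.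

Lemma open_extY S z : open_ext S z -> Y z -> S z.
Proof.
by move=> [_ ncl] Yz; apply: contrapT => nSz; apply: ncl; exact: subset_closure.
Qed.

Lemma open_ext_meets (s : seq (set X)) (W : set X) p :
  closure Y p -> open W -> W p -> (forall S, S \in s -> open_ext S p) ->
  exists z, [/\ Y z, W z & forall S, S \in s -> S z].
Proof.
elim: s W => [|S s IH] W Yp oW Wp sp.
  by have [z [Yz Wz]] := Yp W (open_nbhs_nbhs (conj oW Wp)); exists z.
have [|||z [Yz [Wz eSz] sz]] := IH (W `&` open_ext S) Yp.
- exact/openI/open_open_ext.
- by split => //; apply: sp; rewrite inE eqxx.
- by move=> S' S's; apply: sp; rewrite inE S's orbT.
exists z; split => // S'; rewrite inE => /orP[/eqP-> | /sz //].
exact: open_extY.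
Qed.

Lemma open_ext_separates S x y : preopen Y -> Y x -> separates S x y ->
  open_ext S x /\ ~ closure (open_ext S) y.
Proof.
move=> pY Yx [[U [oU Ux US]] [W [oW Wy WS]]]; split.
  split; first exact: pY.
  move=> /(_ U (open_nbhs_nbhs (conj oU Ux))) [z [[Yz nSz] Uz]].
  exact/nSz/US.
move=> /(_ W (open_nbhs_nbhs (conj oW Wy))) [a [ea Wa]].
have [||||z [Yz [Wz ez] _]] := @open_ext_meets [::] (W `&` open_ext S) a => //.
- by case: ea => /interior_subset.
- exact/openI/open_open_ext.
exact: (WS z (conj Wz Yz) (open_extY ez Yz)).
Qed.

Lemma point_finite_open_ext (F : set (set X)) :
  strongly_point_finite Y F -> point_finite (open_ext @` F).
Proof.
move=> spf p; apply: contrapT => infP.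
pose G := [set S | F S /\ open_ext S p].
have infG : infinite_set G.
  apply: contra_not infP => /(finite_image open_ext); apply: sub_finite_set.
  by move=> _ [[S FS <-] eSp]; exists S.
have [H HG [cH infH]] := infinite_countable_subset infG.
have [G' [G'H [/finite_seqP[s G'E] G'0]]] := spf H (fun S HS => (HG S HS).1) cH infH.
have [S0 HS0] := infinite_setN0 infH.
have Yp : closure Y p by case: (HG S0 HS0).2 => /interior_subset.
have [|z [Yz _ sz]] := @open_ext_meets s setT p Yp openT I.
  by move=> S Ss; have /G'H/HG[] : G' S by rewrite G'E.
suff : (Y `&` \bigcap_(A in G') A) z by rewrite G'0.
by split => // A; rewrite G'E; exact: sz.
Qed.
End RelativeNeighbourhoods.

Lemma F_aleph0_embedded_of_separating (X : topologicalType) (Y : set X)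
    (I : countType) (Sf : I -> set (set X)) :
  preopen Y -> (forall i, strongly_point_finite Y (Sf i)) ->
  (forall x y, Y x -> Y y -> x <> y ->
     exists i S, Sf i S /\ (separates Y S x y \/ separates Y S y x)) ->
  F_aleph0_embedded Y.
Proof.
move=> pY spf sepP.
pose Un n := if unpickle n is Some i then open_ext Y @` Sf i else set0.
exists Un; split.
  by move=> n A; rewrite /Un; case: (unpickle n) => // i [S _ <-]; exact: open_open_ext.
split.
  move=> n; rewrite /Un; case: (unpickle n) => [i|]; first exact: point_finite_open_ext.
  by move=> x; rewrite (_ : [set A | _] = set0) //; apply/seteqP; split => // A [].
move=> x y Yx Yy xy; have [i [S [SfS sep]]] := sepP x y Yx Yy xy.
exists (open_ext Y S); split.
  by exists (pickle i) => //; rewrite /Un pickleK; exists S.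
by case: sep => [/(open_ext_separates pY Yx)|/(open_ext_separates pY Yy)]; [left|right].
Qed.

Section StronglyPointFinite.
Context (X : topologicalType) (Y : set X).

Lemma strongly_point_finite_shrink (F : set (set X)) (f : set X -> set X) :
  strongly_point_finite Y F -> (forall V, F V -> f V `<=` V) ->
  strongly_point_finite Y (f @` F).
Proof.
move=> spf fsub G GF cG iG.
have [v vP] : {v : set X -> set X & forall S, G S -> F (v S) /\ f (v S) = S}.
  apply: (boolp.choice (P := fun S V => G S -> F V /\ f V = S)) => S.
  have [GS|nGS] := pselect (G S); last by exists set0.
  by have [V FV <-] := GF S GS; exists V.
have [|||H [HvG [finH H0]]] := spf (v @` G).
- by move=> _ [S GS <-]; exact: (vP S GS).1.
- exact: card_le_trans (card_image_le _ _) cG.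
- apply: contra_not iG => /(finite_image f); apply: sub_finite_set.
  by move=> S GS; exists (v S); [exists S | exact: (vP S GS).2].
exists (f @` H); split.
  by move=> _ [V /HvG [S GS <-] <-]; rewrite (vP S GS).2.
split; first exact: finite_image.
apply/seteqP; split => // z [Yz zH]; rewrite -H0; split => // V HV.
have [S GS eV] := HvG V HV.
by apply: (fsub V); [rewrite -eV; exact: (vP S GS).1 | apply: zH; exists V].
Qed.

Lemma strongly_point_finite_disjoint (F : set (set X)) :
  (forall A B z, F A -> F B -> Y z -> A z -> B z -> A = B) ->
  strongly_point_finite Y F.
Proof.
move=> disj G GF _ iG; have [A GA] := infinite_setN0 iG.
have [B [GB BA]] : (G `\` [set A]) !=set0.
  exact/infinite_setN0/infinite_setD/finite_set1.
exists [set A; B]; split; first by move=> C [->|->].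
split; first exact: finite_set2.
apply/seteqP; split => // z [Yz zAB]; apply: BA.
by apply: (disj B A z (GF B GB) (GF A GA) Yz); apply: zAB; [right|left].
Qed.

End StronglyPointFinite.

Lemma subbase_T0_separates (X : topologicalType) (Y : set X) (beta : set (set X)) x y :
  T0_space X -> subbase_of Y beta -> Y x -> Y y -> x <> y ->
  exists B, beta B /\ ((B x /\ ~ B y) \/ (B y /\ ~ B x)).
Proof.
move=> T0 [_ sub] Yx Yy xy.
suff half a b : Y a -> Y b -> forall U, open U -> U a -> ~ U b ->
    exists B, beta B /\ B a /\ ~ B b.
  have [U [oU [[Ux Uy]|[Uy Ux]]]] := T0 x y xy.
    by have [B [bB ?]] := half x y Yx Yy U oU Ux Uy; exists B; split => //; left.
  by have [B [bB ?]] := half y x Yy Yx U oU Uy Ux; exists B; split => //; right.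
move=> Ya Yb U oU Ua Ub.
have [s [sb [_ [sa sY]]]] := sub (U `&` Y) a (ex_intro _ U (conj oU erefl)) (conj Ua Ya).
apply: contrapT => noB; apply: Ub; suff [] : (U `&` Y) b by [].
apply: sY => // B Bs; apply: contrapT => nBb; apply: noB.
by exists B; split; [exact: sb | split; [exact: sa|]].
Qed.

Section ZeroSets.
Context (R : realType) (X : topologicalType) (Y : set X).

Lemma rel_nbhs_preimage (f : X -> R) (O : set R) x :
  {within Y, continuous f} -> open O -> Y x -> O (f x) ->
  rel_nbhs Y (Y `&` f @^-1` O) x.
Proof.
move=> /subspace_continuousP fc oO Yx Ofx.
have /(fc x Yx) : nbhs (f x) O by exact: open_nbhs_nbhs.
rewrite /= nbhs_simpl /within /= nbhsE => -[U [oU Ux] UO].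
by exists U; split => // z [Uz Yz]; split => //; exact: UO.
Qed.

Lemma cozero_set_rel_nbhs (C : set X) x : cozero_set_of R Y C -> C x -> rel_nbhs Y C x.
Proof.
move=> [_ [[f [fc [_ ->]]] ->]] [Yx fx].
apply: rel_nbhsS (rel_nbhs_preimage fc (@open_neq _ 0) Yx _).
  by move=> z [Yz /eqP fz]; split => // -[_].
by apply/eqP => f0; apply: fx.
Qed.

Lemma zero_set_compl_rel_nbhs (Z : set X) x :
  zero_set_of R Y Z -> Y x -> ~ Z x -> rel_nbhs Y (~` Z) x.
Proof.
move=> zZ Yx Zx; have : rel_nbhs Y (Y `\` Z) x.
  by apply: cozero_set_rel_nbhs => //; exists Z.
by apply: rel_nbhsS => z [].
Qed.

End ZeroSets.

Section ESpaceSeparation.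
Context (R : realType) (X : topologicalType) (Y : set X).
Variables (alpha : set (set X)) (rep : set X -> nat -> set X).
Variable zf : set X -> nat -> X -> R.
Hypothesis repU : forall V, alpha V -> U_representation R Y V (rep V).
Hypothesis zfP : forall V n, alpha V -> [/\ {within Y, continuous zf V n},
  forall x, Y x -> 0 <= zf V n x & rep V n.*2 = Y `&` zf V n @^-1` [set 0]].

(* With the index shift of U_representation, rep V k.*2.+1 is the cozero set
   U_2k+2(V) and zf V l a function with zero set U_2l+1(V). *)
Definition E_piece V k (o : option (nat * nat)) : set X :=
  rep V k.*2.+1 `&` if o is Some (l, j) then [set z | j.+1%:R^-1 < zf V l z] else setT.

Lemma rep_sub V n : alpha V -> rep V n `<=` V.
Proof. by move=> /repU[VE _] z rz; rewrite VE; exists n. Qed.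

Lemma rep_mono V m n : alpha V -> (m <= n)%N -> rep V m `<=` rep V n.
Proof.
move=> /repU[_ [step _]] /subnK <-; elim: (n - m)%N => [//|d IH].
by rewrite addSn => z /IH /step.
Qed.

Lemma E_piece_sub V k o : alpha V -> E_piece V k o `<=` V.
Proof. by move=> aV z [/(rep_sub aV)]. Qed.

Lemma mem_rep_odd V a : alpha V -> V a -> exists k, rep V k.*2.+1 a.
Proof.
move=> aV; have [VE _] := repU aV; rewrite {1}VE => -[k _ rka]; exists k.
by apply: (rep_mono aV _ rka); apply: leqW; rewrite -addnn leq_addr.
Qed.

Lemma separates_outside V a b : alpha V -> V a -> Y b -> ~ V b ->
  exists k, separates Y (E_piece V k None) a b.
Proof.
move=> aV Va Yb Vb; have [k rka] := mem_rep_odd aV Va; exists k.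
have [_ [_ [zero cozero]]] := repU aV.
split; first by rewrite /E_piece setIT; exact: cozero_set_rel_nbhs.
apply: rel_nbhsS (zero_set_compl_rel_nbhs (zero k.+1) Yb (fun rb => Vb (rep_sub aV rb))).
by apply: subsetC; rewrite /E_piece setIT; apply: rep_mono; rewrite // doubleS.
Qed.

Lemma separates_zero V n a b : alpha V -> V a -> ~ rep V n.*2 a -> rep V n.*2 b ->
  exists k o, separates Y (E_piece V k o) a b.
Proof.
move=> aV Va ra rb; have [k rka] := mem_rep_odd aV Va.
have [_ [_ [_ cozero]]] := repU aV.
have [fc f0 repE] := zfP n aV.
have Ya : Y a by case: (cozero k) => Z [_ rE]; move: rka; rewrite rE => -[].
have fa : 0 < zf V n a.
  by rewrite lt0r f0 // andbT; apply/eqP => fa0; apply: ra; rewrite repE.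
have [j fj] := exists_inv_nat_lt fa.
have [Yb fb] : (Y `&` zf V n @^-1` [set 0]) b by rewrite -repE.
exists k, (Some (n, j)); split.
  apply: rel_nbhsI; first exact: cozero_set_rel_nbhs.
  by apply: rel_nbhsS (rel_nbhs_preimage fc (@open_gt _ _) Ya fj) => z [].
have fbj : zf V n b < j.+1%:R^-1 by rewrite /= fb invr_gt0 ltr0n.
apply: rel_nbhsS (rel_nbhs_preimage fc (@open_lt _ _) Yb fbj).
by move=> z [_ /= fz] [_ /= /(lt_trans fz)]; rewrite ltxx.
Qed.

Lemma E_subbase_separates B a b :
  (alpha `|` [set Y `\` rep V n.*2 | V in alpha & n in @setT nat]) B ->
  Y a -> Y b -> B a -> ~ B b ->
  exists V k o, alpha V /\
    (separates Y (E_piece V k o) a b \/ separates Y (E_piece V k o) b a).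
Proof.
move=> [aB|[V aV [n _ <-]]] Ya Yb Ba Bb.
  by have [k ?] := separates_outside aB Ba Yb Bb; exists B, k, None; split => //; left.
have rb : rep V n.*2 b by apply: contrapT => nrb; apply: Bb.
have [Va|Va] := pselect (V a).
  have [k [o ?]] := separates_zero aV Va Ba.2 rb.
  by exists V, k, o; split => //; left.
have [k ?] := separates_outside aV (rep_sub aV rb) Ya Va.
by exists V, k, None; split => //; right.
Qed.

End ESpaceSeparation.

Lemma preopen_E_subspace_F_aleph0_embedded (R : realType) (X : topologicalType)
    (Y : set X) :
  T0_space X -> preopen Y -> E_subspace R Y -> F_aleph0_embedded Y.
Proof.
move=> T0 pY [alpha [_ [[Fn [alphaE spfF]] [rep [repU subb]]]]].
have [zf zfP] : {zf : set X -> nat -> X -> R & forall V n, alpha V ->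
    [/\ {within Y, continuous zf V n}, forall x, Y x -> 0 <= zf V n x
      & rep V n.*2 = Y `&` zf V n @^-1` [set 0]]}.
  have /boolp.choice[g gP] : forall Vn : set X * nat, exists f : X -> R, alpha Vn.1 ->
      [/\ {within Y, continuous f}, forall x, Y x -> 0 <= f x
        & rep Vn.1 Vn.2.*2 = Y `&` f @^-1` [set 0]].
    move=> [V n]; have [aV|] := pselect (alpha V); last by exists (fun=> 0).
    have [_ [_ [/(_ n)[f [fc [f01 ->]]] _]]] := repU V aV.
    by exists f => _; split => // x /f01 /andP[].
  by exists (fun V n => g (V, n)) => V n /(gP (V, n)).
have Fn_alpha m V : Fn m V -> alpha V by move=> FV; rewrite alphaE; exists m.
pose Sf (i : nat * nat * option (nat * nat)) :=
  let: (m, k, o) := i in (fun V => E_piece rep zf V k o) @` Fn m.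
apply: (F_aleph0_embedded_of_separating (Sf := Sf) pY).
  move=> [[m k] o]; apply: strongly_point_finite_shrink (spfF m) _ => V FV /=.
  by apply: (E_piece_sub repU); exact: Fn_alpha FV.
move=> x y Yx Yy xy; have [B [bB Bxy]] := subbase_T0_separates T0 subb Yx Yy xy.
have [V [k [o [aV sep]]]] : exists V k o, alpha V /\
    (separates Y (E_piece rep zf V k o) x y \/ separates Y (E_piece rep zf V k o) y x).
  case: Bxy => [[Bx By]|[By Bx]].
    exact: (E_subbase_separates repU zfP bB Yx Yy Bx By).
  have [V [k [o [aV sep]]]] := E_subbase_separates repU zfP bB Yy Yx By Bx.
  by exists V, k, o; split => //; rewrite or_comm.
have [m _ FV] : (\bigcup_m Fn m) V by rewrite -alphaE.
by exists (m, k, o), (E_piece rep zf V k o); split => //; exists V.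
Qed.

Section StoneCells.
Context (R : realType) (X : topologicalType) (Y : set X) (d : X -> X -> R) (Rw : rel X).
Hypothesis d0 : forall x, Y x -> d x x = 0.
Hypothesis dsym : forall x y, Y x -> Y y -> d x y = d y x.
Hypothesis dtri : forall x y z, Y x -> Y y -> Y z -> d x z <= d x y + d y z.
Hypothesis Rw_anti : antisymmetric Rw.
Hypothesis Rw_min :
  forall A : set X, A !=set0 -> exists c, A c /\ forall c', A c' -> Rw c c'.

Definition dball x (r : R) := [set z | Y z /\ d x z < r].

Definition least_center (r : R) c x := dball x r c /\ forall c', dball x r c' -> Rw c c'.

Definition stone_cell (r e : R) c := \bigcup_(x in
  [set x | [/\ Y x, least_center r c x & dball x (e + e) `<=` dball c r]]) dball x e.

Lemma dball_open x r z : Y x -> dball x r z ->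
  exists2 e, 0 < e & dball z e `<=` dball x r.
Proof.
move=> Yx [Yz xz]; exists (r - d x z); first by rewrite subr_gt0.
by move=> w [Yw zw]; split => //; have := dtri Yx Yz Yw; lra.
Qed.

Lemma stone_cell_sub r e c : 0 <= e -> stone_cell r e c `<=` dball c r.
Proof. by move=> e0 z [x [_ _ sub] [Yz xz]]; apply: sub; split => //; lra. Qed.

Lemma stone_cell_open r e c z : stone_cell r e c z ->
  exists2 eps, 0 < eps & dball z eps `<=` stone_cell r e c.
Proof.
move=> [x xc zx]; have [Yx _ _] := xc; have [eps eps0 sub] := dball_open Yx zx.
by exists eps => // w /sub wx; exists x.
Qed.

(* The points defining two overlapping cells are within [e + e] of each other,
   so each cell's centre lies within r of the point defining the other cell;
   both centres being Rw-least, they coincide. *)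
Lemma stone_cell_eq r e c c' z : stone_cell r e c z -> stone_cell r e c' z -> c = c'.
Proof.
move=> [x [Yx [[Yc _] cmin] subx] [Yz xz]] [x' [Yx' [[Yc' _] c'min] subx'] [_ x'z]].
have xx' : dball x (e + e) x'.
  by split => //; have := dtri Yx Yz Yx'; rewrite (dsym Yz Yx'); lra.
have x'x : dball x' (e + e) x.
  by split => //; rewrite dsym //; case: xx'.
have [_ cx'] := subx x' xx'; have [_ c'x] := subx' x x'x.
have x'c : dball x' r c by split => //=; rewrite dsym.
have xc' : dball x r c' by split => //=; rewrite dsym.
by apply: Rw_anti; rewrite cmin ?c'min.
Qed.

Lemma stone_cell_cover r x : 0 < r -> Y x -> exists n c, stone_cell r n.+1%:R^-1 c x.
Proof.
move=> r0 Yx; have [|c [[Yc xc] cmin]] := Rw_min (A := dball x r).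
  by exists x; split; rewrite ?d0.
have [n ne] : exists n, n.+1%:R^-1 < (r - d x c) / 2.
  by apply: exists_inv_nat_lt; rewrite divr_gt0 // subr_gt0.
exists n, c, x; last by split; rewrite ?d0 // invr_gt0 ltr0n.
split => // w [Yw xw]; split => //.
set e : R := n.+1%:R^-1 in ne xw *.
by have := dtri Yc Yx Yw; rewrite (dsym Yc Yx); lra.
Qed.

Hypothesis d_open : forall V, V `<=` Y ->
  (forall x, V x -> exists2 e, 0 < e & forall y, Y y -> d x y < e -> V y) -> rel_open Y V.

Lemma rel_open_dball V : V `<=` Y ->
  (forall x, V x -> exists2 e, 0 < e & dball x e `<=` V) -> rel_open Y V.
Proof.
move=> VY Vball; apply: d_open => // x /Vball[e e0 sub].
by exists e => // y Yy xy; apply: sub.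
Qed.

Lemma stone_cell_separates r x y : 0 < r -> Y x -> Y y -> r + r + r <= d x y ->
  exists n c, separates Y (stone_cell r n.+1%:R^-1 c) x y.
Proof.
move=> r0 Yx Yy rxy; have [n [c xc]] := stone_cell_cover r0 Yx.
have e0 : 0 <= n.+1%:R^-1 :> R by rewrite invr_ge0 ler0n.
have [_ cx] := stone_cell_sub e0 xc.
have [_ [_ [[Yc _] _] _] _] := xc.
exists n, c; split.
  apply: rel_open_nbhs xc; apply: rel_open_dball; last exact: stone_cell_open.
  by move=> z /(stone_cell_sub e0) [].
have yy : dball y r y by split; rewrite ?d0.
have ball_y : rel_nbhs Y (dball y r) y.
  by apply: rel_open_nbhs yy; apply: rel_open_dball => [z []|z]; last exact: dball_open.
apply: rel_nbhsS ball_y => z [Yz yz] /(stone_cell_sub e0) [_ cz].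
have := dtri Yx Yc Yy; have := dtri Yc Yz Yy.
by rewrite (dsym Yx Yc) (dsym Yz Yy); lra.
Qed.

End StoneCells.



Lemma dense_metrizable_F_aleph0_embedded (R : realType) (X : topologicalType)
    (Y : set X) :
  dense Y -> metrizable_subspace R Y -> F_aleph0_embedded Y.
Proof.
move=> dY [d [dge0 [dE [dsym [dtri dopen]]]]].
have [Rw wo] := well_ordering_principle X.
have d0 x : Y x -> d x x = 0 by move=> Yx; apply/(dE x x Yx Yx).
pose Sf (i : nat * nat) := range (stone_cell Y d Rw i.1.+1%:R^-1 i.2.+1%:R^-1).
apply: (F_aleph0_embedded_of_separating (Sf := Sf) (dense_preopen dY)).
  move=> i; apply: strongly_point_finite_disjoint => _ _ z [c _ <-] [c' _ <-] _ zc zc'.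
  by rewrite (stone_cell_eq dsym dtri (well_order_antisymmetric wo) zc zc').
move=> x y Yx Yy xy.
have dxy : 0 < d x y.
  by rewrite lt0r dge0 // andbT; apply/eqP => /(dE x y Yx Yy).
have [m mxy] : exists m, m.+1%:R^-1 < d x y / 3.
  by apply: exists_inv_nat_lt; rewrite divr_gt0.
have r0 : 0 < m.+1%:R^-1 :> R by rewrite invr_gt0 ltr0n.
have r3 : m.+1%:R^-1 + m.+1%:R^-1 + m.+1%:R^-1 <= d x y.
  by set r : R := m.+1%:R^-1 in mxy *; lra.
have [n [c sep]] := stone_cell_separates d0 dsym dtri (well_order_min wo)
  (fun V VY => (dopen V VY).2) r0 Yx Yy r3.
by exists (m, n), (stone_cell Y d Rw m.+1%:R^-1 n.+1%:R^-1 c); split; [exists c | left].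
Qed.

Theorem corollary4p9 (R : realType) (X : topologicalType) (HX : T0_space X) :
  (forall Y : set X, preopen Y -> E_subspace R Y -> F_aleph0_embedded Y) /\
  (forall Y : set X, dense Y -> metrizable_subspace R Y -> F_aleph0_embedded Y).
Proof.
split=> Y; first exact: preopen_E_subspace_F_aleph0_embedded.
exact: dense_metrizable_F_aleph0_embedded.
Qed.
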